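(* Let $L$ be any finite-dimensional Lie algebra over a field $F$. Then $\phi^*(L)=R(L)$, the solvable radical of $L$.
   Context: For a nonzero subalgebra $X$ of $L$, the strict core $k(X)$ is the sum of all ideals of $L$ that are proper subalgebras of $X$ (it is $0$ if there are none). For a maximal subalgebra $M$ of $L$, a subalgebra $C$ is a completion of $M$ if $C\not\subseteq M$ but every proper subalgebra of $C$ that is an ideal of $L$ is contained in $M$; an ideal completion is a completion that is an ideal of $L$; an abelian ideal completion is an ideal completion $C$ with $C/k(C)$ abelian. $F^*(L)$ is the intersection of all maximal subalgebras of $L$ which have no abelian ideal completion (with $F^*(L)=L$ if there are no such maximal subalgebras), and $\phi^*(L)$ is the largest ideal of $L$ contained in $F^*(L)$. $R(L)$ is the largest solvable ideal of $L$. *)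

From HB Require Import structures.
From mathcomp Require Import all_boot all_algebra.
Set Implicit Arguments. Unset Strict Implicit. Unset Printing Implicit Defensive.
Import GRing.Theory.
Local Open Scope ring_scope.

Definition is_lie (F : fieldType) (L : vectType F) (br : L -> L -> L) : Prop :=
  [/\ forall a x y z, br (a *: x + y) z = a *: br x z + br y z,
      forall a x y z, br z (a *: x + y) = a *: br z x + br z y,
      forall x, br x x = 0 &
      forall x y z, br x (br y z) + br y (br z x) + br z (br x y) = 0].

Section Lie.
Variables (F : fieldType) (L : vectType F) (br : L -> L -> L).

Definition subalg (A : {vspace L}) : Prop :=
  forall x y, x \in A -> y \in A -> br x y \in A.

Definition ideal (A : {vspace L}) : Prop :=
  forall x y, y \in A -> br x y \in A.

(* [A, B]: the subspace spanned by all brackets [a, b] (spanned by brackets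
   of basis vectors, by bilinearity) *)
Definition lbr (A B : {vspace L}) : {vspace L} :=
  <<[seq br a b | a <- vbasis A, b <- vbasis B]>>%VS.

Fixpoint derived (A : {vspace L}) (n : nat) : {vspace L} :=
  match n with
  | 0 => A
  | n.+1 => lbr (derived A n) (derived A n)
  end.

Definition solvable (A : {vspace L}) : Prop := exists n, derived A n = 0%VS.

Definition max_subalg (M : {vspace L}) : Prop :=
  [/\ subalg M, M <> fullv &
      forall A, subalg A -> (M <= A)%VS -> A = M \/ A = fullv].

(* K is the strict core k(X): the sum of all ideals of L that are proper
   subalgebras of X, i.e. the least subspace containing all of them
   (0 if there are none). *)
Definition strict_core_spec (X K : {vspace L}) : Prop :=
  (forall I, ideal I -> subalg I -> (I <= X)%VS -> I <> X -> (I <= K)%VS) /\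
  (forall K', (forall I, ideal I -> subalg I -> (I <= X)%VS -> I <> X ->
                 (I <= K')%VS) -> (K <= K')%VS).

Definition completion (M C : {vspace L}) : Prop :=
  [/\ subalg C, ~ (C <= M)%VS &
      forall I, subalg I -> ideal I -> (I <= C)%VS -> I <> C -> (I <= M)%VS].

Definition ideal_completion (M C : {vspace L}) : Prop :=
  completion M C /\ ideal C.

(* C / k(C) abelian, i.e. [C, C] <= k(C) *)
Definition abelian_ideal_completion (M C : {vspace L}) : Prop :=
  ideal_completion M C /\
  exists K, strict_core_spec C K /\ (lbr C C <= K)%VS.

(* membership in F*(L): the intersection of all maximal subalgebras having
   no abelian ideal completion (all of L if there are none) *)
Definition in_Fstar (x : L) : Prop :=
  forall M, max_subalg M -> ~ (exists C, abelian_ideal_completion M C) ->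
    x \in M.

Definition is_phistar (P : {vspace L}) : Prop :=
  [/\ ideal P, (forall x, x \in P -> in_Fstar x) &
      forall I, ideal I -> (forall x, x \in I -> in_Fstar x) -> (I <= P)%VS].

Definition is_radical (R : {vspace L}) : Prop :=
  [/\ ideal R, solvable R &
      forall I, ideal I -> solvable I -> (I <= R)%VS].

End Lie.

(* R(L) <= F*(L): if a maximal subalgebra M misses the solvable radical, a
   minimal ideal C of L inside R(L) but not inside M is an ideal completion of
   M, and C / k(C) is abelian because [C, C] is a proper ideal of C.
   Conversely, let I <= F*(L) be a non-solvable ideal, P = [P, P] <> 0 the
   limit of its derived series, and J a maximal ideal of L not containing P.
   Some maximal subalgebra M >= J misses P: otherwise, by Fitting's lemma,
   every element of P + J acts nilpotently on L / J, and Engel's lemma gives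
   P + J <> [P + J, P + J] + J, contradicting P = [P, P].  Such an M has no
   abelian ideal completion C, since P <= C + J would force
   P = [P, P] <= J + [C, C] <= J + k(C) <= M.  Hence I <= M, a contradiction. *)

From HB Require Import structures.
From mathcomp Require Import all_boot all_algebra.
From Stdlib Require Import Classical.
Set Implicit Arguments. Unset Strict Implicit. Unset Printing Implicit Defensive.
Import GRing.Theory.
Local Open Scope ring_scope.

Section ExtremalSubspaces.
Variables (F : fieldType) (L : vectType F).

Lemma dimv_proper (U V : {vspace L}) : (U <= V)%VS -> U <> V -> (\dim U < \dim V)%N.
Proof. by move=> sUV neUV; rewrite (ltn_leqif (dimv_leqif_eq sUV)); apply/eqP. Qed.

Lemma ex_minspace (P : {vspace L} -> Prop) A0 : P A0 ->
  exists2 A, P A & forall B, P B -> (B <= A)%VS -> B = A.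
Proof.
have [n] := ubnP (\dim A0); elim: n A0 => // n IH A0 ltA0n PA0.
case: (classic (exists B, [/\ P B, (B <= A0)%VS & B <> A0])) => [[B [PB sBA neBA]]|noB].
  by apply: (IH B) => //; exact: leq_trans (dimv_proper sBA neBA) _.
exists A0 => // B PB sBA; apply: NNPP => neBA; apply: noB; by exists B.
Qed.

Lemma ex_maxspace (P : {vspace L} -> Prop) A0 : P A0 ->
  exists2 A, P A & forall B, P B -> (A <= B)%VS -> B = A.
Proof.
have [n] := ubnP (\dim (fullv : {vspace L}) - \dim A0).
elim: n A0 => // n IH A0 ltA0n PA0.
case: (classic (exists B, [/\ P B, (A0 <= B)%VS & B <> A0])) => [[B [PB sAB neBA]]|noB].
  have ltAB := dimv_proper sAB (nesym neBA).
  rewrite ltnS in ltA0n; apply: (IH B) => //; apply: leq_trans ltA0n.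
  by apply: ltn_sub2l => //; exact: leq_trans ltAB (dimvS (subvf B)).
exists A0 => // B PB sAB; apply: NNPP => neBA; apply: noB; by exists B.
Qed.

End ExtremalSubspaces.

Arguments ex_minspace {F L} P {A0}.
Arguments ex_maxspace {F L} P {A0}.

Section LieAlgebra.
Variables (F : fieldType) (L : vectType F) (br : L -> L -> L).
Hypothesis lieL : is_lie br.
Implicit Types A B C H I J K M P S U W X : {vspace L}.

(* [adl x] and [adr z] name [br x] and [br ^~ z], to carry their linear
   structures. *)
Definition adl x := br x.
Definition adr z y := br y z.
Fact adl_is_linear x : linear (adl x).
Proof. by move=> a u v; case: lieL => _ brDZr _ _; apply: brDZr. Qed.
Fact adr_is_linear z : linear (adr z).
Proof. by move=> a u v; case: lieL => brDZl _ _ _; apply: brDZl. Qed.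
HB.instance Definition _ x := GRing.isLinear.Build F L L *:%R (adl x) (adl_is_linear x).
HB.instance Definition _ z := GRing.isLinear.Build F L L *:%R (adr z) (adr_is_linear z).

Lemma brDr x u v : br x (u + v) = br x u + br x v. Proof. exact: (raddfD (adl x)). Qed.
Lemma brDl x u v : br (u + v) x = br u x + br v x. Proof. exact: (raddfD (adr x)). Qed.
Lemma brZr x a u : br x (a *: u) = a *: br x u. Proof. exact: (linearZZ (adl x)). Qed.
Lemma brZl x a u : br (a *: u) x = a *: br u x. Proof. exact: (linearZZ (adr x)). Qed.
Lemma br0r x : br x 0 = 0. Proof. exact: (raddf0 (adl x)). Qed.
Lemma br0l x : br 0 x = 0. Proof. exact: (raddf0 (adr x)). Qed.
Lemma brNr x u : br x (- u) = - br x u. Proof. exact: (raddfN (adl x)). Qed.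

Lemma br_sumr x (T : Type) r (P : pred T) (G : T -> L) :
  br x (\sum_(i <- r | P i) G i) = \sum_(i <- r | P i) br x (G i).
Proof. exact: (linear_sum (adl x)). Qed.
Lemma br_suml x (T : Type) r (P : pred T) (G : T -> L) :
  br (\sum_(i <- r | P i) G i) x = \sum_(i <- r | P i) br (G i) x.
Proof. exact: (linear_sum (adr x)). Qed.

Lemma brxx x : br x x = 0. Proof. by case: lieL. Qed.

Lemma brC x y : br y x = - br x y.
Proof.
apply/eqP; rewrite -addr_eq0 addrC.
by have := brxx (x + y); rewrite brDl !brDr !brxx add0r addr0 => ->.
Qed.

Lemma br_deriv x y z : br x (br y z) = br (br x y) z + br y (br x z).
Proof.
case: lieL => _ _ _ /(_ x y z) /eqP.
rewrite (brC x z) brNr (brC (br x y) z) -addrA addr_eq0 => /eqP ->.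
by rewrite opprD !opprK addrC.
Qed.

Definition ad x : 'End(L) := linfun (adl x).
Lemma adE x y : ad x y = br x y. Proof. by rewrite lfunE. Qed.

Lemma ideal_subalg A : ideal br A -> subalg br A.
Proof. by move=> idA x y _; apply: idA. Qed.

Lemma ideal_meml A x y : ideal br A -> x \in A -> br x y \in A.
Proof. by move=> idA xA; rewrite brC memvN; apply: idA. Qed.

Lemma ideal0 : ideal br 0%VS.
Proof. by move=> x y; rewrite memv0 => /eqP ->; rewrite br0r mem0v. Qed.

Lemma ideal_add I J : ideal br I -> ideal br J -> ideal br (I + J).
Proof.
move=> idI idJ x _ /memv_addP[i iI [j jJ ->]]; rewrite brDr.
by apply: memv_add; [apply: idI | apply: idJ].
Qed.

Lemma subalg_add_ideal S J : subalg br S -> ideal br J -> subalg br (S + J).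
Proof.
move=> sS idJ _ _ /memv_addP[s sS' [j jJ ->]] /memv_addP[t tS [i iJ ->]].
rewrite brDl !brDr -addrA; apply: memv_add; first exact: sS.
by apply: memvD; [apply: idJ | apply: memvD; [apply: ideal_meml | apply: idJ]].
Qed.

Lemma subalg_add_line H y : subalg br H ->
  (forall h, h \in H -> br h y \in H) -> subalg br (H + <[y]>).
Proof.
move=> sH Hy _ _ /memv_addP[h hH [_ /vlineP[a ->] ->]]
  /memv_addP[k kH [_ /vlineP[b ->] ->]].
rewrite brDl !brDr !brZl !brZr brxx !scaler0 addr0 (brC k y) scalerN.
rewrite -[X in X \in _]addr0; apply: memv_add; last exact: mem0v.
by apply: memvD; [apply: memvD; [apply: sH | apply/memvZ/Hy] |
  rewrite memvN; apply/memvZ/Hy].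
Qed.

Lemma memv_lbr A B x y : x \in A -> y \in B -> br x y \in lbr br A B.
Proof.
move=> xA yB; rewrite (coord_vbasis xA) (coord_vbasis yB) br_suml.
apply: memv_suml => i _; rewrite brZl br_sumr; apply: memvZ.
apply: memv_suml => j _; rewrite brZr; apply: memvZ.
by apply: memv_span; apply: allpairs_f; apply: mem_nth; rewrite size_tuple.
Qed.

Lemma lbr_sub A B S :
  (forall x y, x \in A -> y \in B -> br x y \in S) -> (lbr br A B <= S)%VS.
Proof.
move=> brABS; apply/span_subvP => _ /allpairsP[[a b] [/= aA bB ->]].
by apply: brABS; apply: vbasis_mem.
Qed.

Lemma lbrS A A' B B' : (A <= A')%VS -> (B <= B')%VS ->
  (lbr br A B <= lbr br A' B')%VS.
Proof.
move=> /subvP sAA' /subvP sBB'; apply: lbr_sub => x y xA yB.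
by apply: memv_lbr; [apply: sAA' | apply: sBB'].
Qed.

Lemma lbr_subl A B : ideal br A -> (lbr br A B <= A)%VS.
Proof. by move=> idA; apply: lbr_sub => x y xA _; apply: ideal_meml. Qed.

Lemma lbr_ideal A B : ideal br A -> ideal br B -> ideal br (lbr br A B).
Proof.
move=> idA idB x y yAB; rewrite -adE; apply: (subvP _ _ (memv_img (ad x) yAB)).
rewrite limg_span; apply/span_subvP => _ /mapP[_ /allpairsP[[a b] [/= aA bB ->]] ->].
rewrite adE br_deriv; apply: memvD; apply: memv_lbr;
  by [apply: idA; apply: vbasis_mem | apply: idB; apply: vbasis_mem | apply: vbasis_mem].
Qed.

Lemma lbr_add_ideal I X : ideal br I ->
  (lbr br (I + X) (I + X) <= I + lbr br X X)%VS.
Proof.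
move=> idI; apply: lbr_sub => _ _ /memv_addP[i iI [u uX ->]] /memv_addP[j jI [v vX ->]].
rewrite brDl !brDr addrA; apply: memv_add; last exact: memv_lbr.
by apply: memvD; [apply: memvD; apply: ideal_meml | apply: idI].
Qed.

Lemma derived_ideal A n : ideal br A -> ideal br (derived br A n).
Proof. by move=> idA; elim: n => //= n IH; apply: lbr_ideal. Qed.

Lemma derived_sub A n : ideal br A -> (derived br A n <= A)%VS.
Proof.
move=> idA; elim: n => [|n IH] /=; first exact: subvv.
apply: subv_trans IH; apply: lbr_subl; exact: derived_ideal.
Qed.

Lemma derivedS A B n : (A <= B)%VS -> (derived br A n <= derived br B n)%VS.
Proof. by move=> sAB; elim: n => //= n IH; apply: lbrS. Qed.

Lemma derivedD A m n : derived br (derived br A n) m = derived br A (m + n).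
Proof. by elim: m => //= m ->. Qed.

Lemma derived0 n : derived br 0%VS n = 0%VS.
Proof.
elim: n => //= n ->; apply/eqP; rewrite -subv0; apply: lbr_sub => x y.
by rewrite memv0 => /eqP -> _; rewrite br0l mem0v.
Qed.

Lemma derived_add_ideal I X n : ideal br I ->
  (derived br (I + X) n <= I + derived br X n)%VS.
Proof.
move=> idI; elim: n => [|n IH] /=; first exact: subvv.
exact: subv_trans (lbrS IH IH) (lbr_add_ideal _ idI).
Qed.

Lemma solvable_add I J : ideal br I -> solvable br I -> solvable br J ->
  solvable br (I + J).
Proof.
move=> idI [m dIm] [n dJn]; exists (m + n); rewrite -derivedD.
apply/eqP; rewrite -subv0 -dIm; apply: derivedS.
by have := derived_add_ideal J n idI; rewrite dJn addv0.
Qed.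

Lemma solvableS I J : (I <= J)%VS -> solvable br J -> solvable br I.
Proof. by move=> sIJ [n dJn]; exists n; apply/eqP; rewrite -subv0 -dJn derivedS. Qed.

Lemma solvable_perfect_eq0 C : solvable br C -> lbr br C C = C -> C = 0%VS.
Proof.
by move=> [n <-] perfC; elim: n => //= n <-.
Qed.

Lemma ex_perfect_derived I : ideal br I ->
  exists k, lbr br (derived br I k) (derived br I k) = derived br I k.
Proof.
move=> idI; have [_ [k ->] minD] :=
  ex_minspace (fun D => exists k, D = derived br I k) (ex_intro _ 0%N erefl).
exists k; apply: minD; first by exists k.+1.
exact/lbr_subl/derived_ideal.
Qed.

Lemma ex_radical : exists R, is_radical br R.
Proof.
have [R [idR solR] maxR] := ex_maxspace (fun A => ideal br A /\ solvable br A)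
  (conj ideal0 (ex_intro _ 0%N (derived0 0))).
exists R; split=> // I idI solI.
rewrite -(maxR (R + I)%VS) ?addvSr ?addvSl //.
by split; [apply: ideal_add | apply: solvable_add].
Qed.

(* [k(X)] is the intersection of all subspaces containing every ideal
   subalgebra properly contained in [X]. *)
Lemma ex_strict_core X : exists K, strict_core_spec br X K.
Proof.
pose bounds K := forall I, ideal br I -> subalg br I -> (I <= X)%VS -> I <> X ->
  (I <= K)%VS.
have [S lbS maxS] := ex_maxspace (fun S => forall K, bounds K -> (S <= K)%VS)
  (fun K _ => sub0v K).
exists S; split=> // I idI saI sIX neIX.
rewrite -(maxS (S + I)%VS) ?addvSr ?addvSl // => K bK.
by rewrite subv_add lbS // bK.
Qed.

Lemma ex_max_subalg S : subalg br S -> S <> fullv ->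
  exists2 M, max_subalg br M & (S <= M)%VS.
Proof.
move=> saS neSf; have [M [saM sSM neMf] maxM] := ex_maxspace
  (fun M => [/\ subalg br M, (S <= M)%VS & M <> fullv]) (And3 saS (subvv S) neSf).
exists M => //; split=> // A saA sMA.
case: (classic (A = fullv)) => [|neAf]; [by right | left].
by apply: (maxM _ _ sMA); split=> //; apply: subv_trans sSM sMA.
Qed.

Lemma solvable_abelian_completion R M : ideal br R -> solvable br R ->
  ~~ (R <= M)%VS -> exists C, abelian_ideal_completion br M C.
Proof.
move=> idR solR nsRM.
have [C [idC sCR nsCM] minC] := ex_minspace
  (fun C => [/\ ideal br C, (C <= R)%VS & ~~ (C <= M)%VS]) (And3 idR (subvv R) nsRM).
have [K coreK] := ex_strict_core C.
exists C; split; first split; first split.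
- exact: ideal_subalg.
- exact/negP.
- move=> I _ idI sIC neIC; apply: NNPP => /negP nsIM; apply: neIC.
  by apply: (minC _ _ sIC); split=> //; apply: subv_trans sIC sCR.
- exact: idC.
exists K; split=> //; apply: coreK.1;
  [exact: lbr_ideal | exact/ideal_subalg/lbr_ideal | exact: lbr_subl |].
move=> perfC; move: nsCM.
by rewrite (solvable_perfect_eq0 (solvableS sCR solR) perfC) sub0v.
Qed.

Definition adpow x n := iter n (br x).
Fact adpow_is_linear x n : linear (adpow x n).
Proof. by move=> a u v; elim: n => //= n IH; rewrite IH brDr brZr. Qed.
HB.instance Definition _ x n :=
  GRing.isLinear.Build F L L *:%R (adpow x n) (adpow_is_linear x n).

Lemma iter_br0 x n : iter n (br x) 0 = 0. Proof. exact: (raddf0 (adpow x n)). Qed.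
Lemma iter_brD x n u v : iter n (br x) (u + v) = iter n (br x) u + iter n (br x) v.
Proof. exact: (raddfD (adpow x n)). Qed.

(* For [n] large, the Fitting null and one components [L0(x)], [L1(x)] of
   [ad x]. *)
Definition fitting0 x n : {vspace L} := lker (linfun (adpow x n)).
Definition fitting1 x n : {vspace L} := limg (linfun (adpow x n)).

Lemma mem_fitting0 x n y : (y \in fitting0 x n) = (iter n (br x) y == 0).
Proof. by rewrite memv_ker lfunE. Qed.

Lemma fitting0_addn x m n : (fitting0 x n <= fitting0 x (m + n))%VS.
Proof.
by apply/subvP => y; rewrite !mem_fitting0 iterD => /eqP ->; rewrite iter_br0.
Qed.

Lemma ex_fitting_exponent x :
  exists2 n, (0 < n)%N & forall m, fitting0 x (m + n) = fitting0 x n.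
Proof.
have [_ [n n_gt0 ->] maxK] := ex_maxspace
  (fun K => exists2 n, (0 < n)%N & K = fitting0 x n) (ex_intro2 _ _ 1%N isT erefl).
exists n => // m; apply: maxK (fitting0_addn x m n).
by exists (m + n)%N; rewrite ?ltn_addl.
Qed.

Lemma iter_br_eq0 x a b y z :
  iter a (br x) y = 0 -> iter b (br x) z = 0 -> iter (a + b) (br x) (br y z) = 0.
Proof.
elim: a y b z => [|a IHa] y b z; first by move=> /= ->; rewrite br0l iter_br0.
elim: b z => [|b IHb] z ay bz.
  by move: bz => /= ->; rewrite br0r iter_br0 br0r.
rewrite addnS iterSr br_deriv iter_brD IHb -?iterSr // addr0 addSnnS.
by apply: IHa; rewrite -?iterSr.
Qed.

Section FittingComponents.
Variables (x : L) (n : nat).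
Hypothesis fitting0_stable : forall m, fitting0 x (m + n) = fitting0 x n.

Lemma fitting0_subalg : subalg br (fitting0 x n).
Proof.
move=> y z ny nz; rewrite -(fitting0_stable n) mem_fitting0.
by move: ny nz; rewrite !mem_fitting0 => /eqP ny /eqP nz; rewrite iter_br_eq0.
Qed.

Lemma fitting_decomposition : (fitting0 x n + fitting1 x n)%VS = fullv.
Proof.
have cap0 : (fitting0 x n :&: fitting1 x n = 0)%VS.
  apply/eqP; rewrite -subv0; apply/subvP => v /memv_capP[v0 /memv_imgP[w _ vE]].
  move: v0; rewrite vE memv0 !lfunE mem_fitting0 -iterD -mem_fitting0 fitting0_stable.
  by rewrite mem_fitting0.
apply/eqP; rewrite eqEdim subvf /=.
have := dimv_sum_cap (fitting0 x n) (fitting1 x n); rewrite cap0 dimv0 addn0 => ->.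
by rewrite -(limg_ker_dim (linfun (adpow x n)) fullv) capfv.
Qed.

End FittingComponents.

Definition ad_stable K U := forall x u, x \in K -> u \in U -> br x u \in U.

Definition ad_nilpotent_mod J K :=
  forall x, x \in K -> exists n, forall y, iter n (br x) y \in J.

Lemma ideal_ad_stable J K : ideal br J -> ad_stable K J.
Proof. by move=> idJ x u _; apply: idJ. Qed.

Lemma ad_stable_iter K U x u n : ad_stable K U -> x \in K -> u \in U ->
  iter n (br x) u \in U.
Proof. by move=> stU xK uU; elim: n => //= n IH; apply: stU. Qed.

Lemma ad_stableS K K' U : (K' <= K)%VS -> ad_stable K U -> ad_stable K' U.
Proof. by move=> sK'K stU x u xK'; apply: stU; apply: (subvP sK'K). Qed.

Lemma ad_nilpotent_modS J K K' : (K' <= K)%VS ->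
  ad_nilpotent_mod J K -> ad_nilpotent_mod J K'.
Proof. by move=> sK'K nilK x xK'; apply: nilK; apply: (subvP sK'K). Qed.

Lemma annihilated_iter H W y v k : (forall h, h \in H -> br h y \in H) ->
  (forall w, w \in W -> br y w \in W) -> (forall h, h \in H -> br h v \in W) ->
  forall h, h \in H -> br h (iter k (br y) v) \in W.
Proof.
move=> nHy stWy; elim: k v => // k IH v annv h hH.
rewrite iterSr; apply: IH => // {}h {}hH.
have -> : br h (br y v) = br y (br h v) - br (br y h) v.
  by rewrite (br_deriv y h v) addrAC subrr add0r.
by rewrite memvB ?stWy ?annv // brC memvN nHy.
Qed.

(* Induction on [\dim K]: a maximal proper
   subalgebra [H] is normalized by some [y], hence [K = H + <[y]>], and [ad y]
   acts nilpotently on the vectors of [U] fixed by [H] modulo [W]. *)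
Lemma engel_fixed_vector J K U W : ideal br J -> subalg br K -> (J <= K)%VS ->
  ad_nilpotent_mod J K -> ad_stable K U -> ad_stable K W -> (J <= W)%VS ->
  ~~ (U <= W)%VS ->
  exists u, [/\ u \in U, u \notin W & forall x, x \in K -> br x u \in W].
Proof.
move=> idJ; have [n] := ubnP (\dim K); elim: n K U W => // n IH K U W.
move=> ltKn saK sJK nilK stU stW sJW nsUW.
have [-> | neKJ] := eqVneq K J.
  have [u uU uW] := subvPn nsUW; exists u; split=> // x xJ.
  exact/(subvP sJW)/ideal_meml.
have [H [saH sJH sHK neHK] maxH] := ex_maxspace
  (fun H => [/\ subalg br H, (J <= H)%VS, (H <= K)%VS & H <> K])
  (And4 (ideal_subalg idJ) (subvv J) sJK (nesym (elimN eqP neKJ))).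
have ltHn : (\dim H < n)%N := leq_trans (dimv_proper sHK neHK) ltKn.
have nilH := ad_nilpotent_modS sHK nilK.
have nsKH : ~~ (K <= H)%VS.
  by apply/negP => sKH; apply: neHK; apply/eqP; rewrite eqEsubv sHK.
have [y [yK yH nHy]] := IH H K H ltHn saH sJH nilH
  (ad_stableS sHK saK) saH sJH nsKH.
have KE : (H + <[y]>)%VS = K.
  apply: NNPP => neHyK; move: yH; rewrite -(maxH (H + <[y]>)%VS) ?addvSl //.
    by rewrite memvE addvSr.
  split; [exact: subalg_add_line | exact: subv_trans sJH (addvSl _ _) |
    by rewrite subv_add sHK -memvE | exact: neHyK].
have [u0 [u0U u0W annu0]] := IH H U W ltHn saH sJH nilH
  (ad_stableS sHK stU) (ad_stableS sHK stW) sJW nsUW.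
have [N nilyN] := nilK y yK.
have yNW : iter N (br y) u0 \in W := subvP sJW _ (nilyN u0).
have [[|k] yk1W mink] := ex_minnP (ex_intro (fun m => iter m (br y) u0 \in W) N yNW).
  by rewrite yk1W in u0W.
have ykW : iter k (br y) u0 \notin W.
  by apply/negP => /mink; rewrite ltnn.
exists (iter k (br y) u0); split=> //; first exact: ad_stable_iter stU yK u0U.
rewrite -KE => _ /memv_addP[h hH [_ /vlineP[c ->] ->]].
rewrite brDl brZl; apply: memvD.
  exact: annihilated_iter nHy (fun w => stW y w yK) annu0 h hH.
by apply: memvZ; rewrite -iterS.
Qed.

(* With [W] a maximal [K]-submodule between [J] and [K], Engel's lemma gives
   [K = W + <[u]>] with [[K, u] <= W], so [[K, K] <= W]. *)
Lemma nilpotent_mod_not_perfect J K : ideal br J -> subalg br K ->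
  (J <= K)%VS -> J <> K -> ad_nilpotent_mod J K -> ~~ (K <= lbr br K K + J)%VS.
Proof.
move=> idJ saK sJK neJK nilK.
have [W [sJW sWK neWK stW] maxW] := ex_maxspace
  (fun W => [/\ (J <= W)%VS, (W <= K)%VS, W <> K & ad_stable K W])
  (And4 (subvv J) sJK neJK (ideal_ad_stable idJ)).
have nsKW : ~~ (K <= W)%VS.
  by apply/negP => sKW; apply: neWK; apply/eqP; rewrite eqEsubv sWK.
have [u [uK uW annu]] := engel_fixed_vector idJ saK sJK nilK saK stW sJW nsKW.
have brKu a b : a \in K -> b \in (W + <[u]>)%VS -> br a b \in W.
  move=> aK /memv_addP[w wW [_ /vlineP[c ->] ->]].
  by rewrite brDr brZr; apply: memvD; [apply: stW | apply/memvZ/annu].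
have WuE : (W + <[u]>)%VS = K.
  apply: NNPP => neWuK; move: uW; rewrite -(maxW (W + <[u]>)%VS) ?addvSl //.
    by rewrite memvE addvSr.
  split=> //; first exact: subv_trans sJW (addvSl _ _).
    by rewrite subv_add sWK -memvE.
  move=> a v aK vWu; apply: (subvP (addvSl W <[u]>)); exact: brKu.
apply/negP => sKKK; apply: neWK; apply/eqP; rewrite eqEsubv sWK.
apply: subv_trans sKKK _; rewrite subv_add sJW andbT.
by apply: lbr_sub => a b aK; rewrite -{1}WuE; apply: brKu.
Qed.

Lemma fitting1_sub_ideal K x n : ideal br K -> x \in K -> (0 < n)%N ->
  (fitting1 x n <= K)%VS.
Proof.
move=> idK xK; case: n => // n _; apply/subvP => _ /memv_imgP[w _ ->].
by rewrite lfunE; apply: ideal_meml.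
Qed.

(* [L = L0(x) + L1(x)], with [L0(x)] a subalgebra and [L1(x) <= K]: if
   [L0(x) + J] were proper, a maximal subalgebra containing it would also
   contain [K], hence all of [L]. *)
Lemma ad_nilpotent_mod_ideal J K : ideal br J -> ideal br K ->
  (forall M, max_subalg br M -> (J <= M)%VS -> (K <= M)%VS) ->
  ad_nilpotent_mod J K.
Proof.
move=> idJ idK sKmax x xK; have [n n_gt0 stab] := ex_fitting_exponent x.
exists n => y; case: (classic ((fitting0 x n + J)%VS = fullv)) => [f0JE | neF].
  have : y \in (fitting0 x n + J)%VS by rewrite f0JE memvf.
  case/memv_addP=> [u + [j jJ ->]]; rewrite mem_fitting0 iter_brD => /eqP ->.
  by rewrite add0r; apply: ad_stable_iter (ideal_ad_stable idJ) (memvf x) jJ.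
have [M maxM sf0JM] := ex_max_subalg
  (subalg_add_ideal (fitting0_subalg stab) idJ) neF.
case: (maxM) => _ neMf _; exfalso; apply: neMf; apply/eqP.
rewrite eqEsubv subvf -(fitting_decomposition stab) subv_add.
rewrite (subv_trans (addvSl _ _) sf0JM) /=.
apply: subv_trans (fitting1_sub_ideal idK xK n_gt0) (sKmax M maxM _).
exact: subv_trans (addvSr _ _) sf0JM.
Qed.

Lemma ex_max_subalg_avoiding J P : ideal br J -> ideal br P ->
  lbr br P P = P -> ~~ (P <= J)%VS ->
  exists M, [/\ max_subalg br M, (J <= M)%VS & ~~ (P <= M)%VS].
Proof.
move=> idJ idP perfP nsPJ; apply: NNPP => noM.
have idK := ideal_add idP idJ.
have sKmax M : max_subalg br M -> (J <= M)%VS -> (P + J <= M)%VS.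
  move=> maxM sJM; rewrite subv_add sJM andbT; apply: NNPP => /negP nsPM.
  by apply: noM; exists M.
have neJK : J <> (P + J)%VS by move=> JE; move: nsPJ; rewrite JE addvSl.
have sKKK : (P + J <= lbr br (P + J) (P + J) + J)%VS.
  rewrite subv_add addvSr andbT -{1}perfP.
  exact: subv_trans (lbrS (addvSl P J) (addvSl P J)) (addvSl _ _).
move/negP: (nilpotent_mod_not_perfect idJ (ideal_subalg idK) (addvSr P J) neJK
  (ad_nilpotent_mod_ideal idJ idK sKmax)); exact.
Qed.

Lemma no_abelian_completion J P M : ideal br J -> lbr br P P = P ->
  (forall I, ideal br I -> (J <= I)%VS -> ~~ (P <= I)%VS -> I = J) ->
  (J <= M)%VS -> ~~ (P <= M)%VS -> ~ exists C, abelian_ideal_completion br M C.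
Proof.
move=> idJ perfP maxJ sJM nsPM [C [[[_ nsCM compC] idC] [K [[_ leastK] sCCK]]]].
have sKM : (K <= M)%VS by apply: leastK => I saI idI; apply: compC.
have sPCJ : (P <= J + C)%VS.
  apply: NNPP => /negP nsPJC; have := maxJ _ (ideal_add idJ idC) (addvSl J C) nsPJC.
  by move=> JCE; apply: nsCM; apply: subv_trans sJM; rewrite -JCE addvSr.
move/negP: nsPM; apply; rewrite -perfP.
apply: subv_trans (lbrS sPCJ sPCJ) _; apply: subv_trans (lbr_add_ideal _ idJ) _.
by rewrite subv_add sJM (subv_trans sCCK sKM).
Qed.

Lemma Fstar_ideal_solvable I : ideal br I ->
  (forall x, x \in I -> in_Fstar br x) -> solvable br I.
Proof.
move=> idI sIFstar; apply: NNPP => nsolI.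
have [k perfP] := ex_perfect_derived idI; set P := derived br I k in perfP.
have nsP0 : ~~ (P <= 0)%VS.
  by rewrite subv0; apply/eqP => P0; apply: nsolI; exists k.
have [J [idJ nsPJ] maxJ] := ex_maxspace
  (fun J => ideal br J /\ ~~ (P <= J)%VS) (conj ideal0 nsP0).
have [M [maxM sJM nsPM]] := ex_max_subalg_avoiding idJ (derived_ideal idI) perfP nsPJ.
have noAIC := no_abelian_completion idJ perfP
  (fun I' idI' sJI' nsPI' => maxJ I' (conj idI' nsPI') sJI') sJM nsPM.
move/negP: nsPM; apply; apply: subv_trans (derived_sub k idI) _.
by apply/subvP => x xI; apply: sIFstar x xI M maxM noAIC.
Qed.

Lemma radical_in_Fstar R x : is_radical br R -> x \in R -> in_Fstar br x.
Proof.
move=> [idR solR _] xR M _ noAIC; apply: (subvP _ x xR); apply: NNPP => /negP nsRM.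
exact/noAIC/(solvable_abelian_completion idR solR).
Qed.

End LieAlgebra.

Theorem theorem2p11 (F : fieldType) (L : vectType F) (br : L -> L -> L) :
  is_lie br ->
  exists P : {vspace L}, is_phistar br P /\ is_radical br P.
Proof.
move=> lieL; have [R radR] := ex_radical lieL; exists R; split=> //.
have [idR _ maxR] := radR; split=> // [x|I idI sIFstar].
  exact: radical_in_Fstar.
by apply: maxR => //; apply: Fstar_ideal_solvable.
Qed.
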